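(* Let $\mathfrak M$ be a D2-brane, $M_\Lambda = \{\vec x \in \mathbb R^3, \ker(D_x)\not=0\}$ its eigenmanifold, and $M_\Lambda \ni x \mapsto |\Lambda(x) \rangle \hspace{-0.2em} \rangle \in \ker D_x$ a normalised quasicoherent state. Then: 1. $\langle \hspace{-0.2em} \langle \Lambda(\vec x)|\vec X|\Lambda(\vec x)\rangle \hspace{-0.2em} \rangle = \vec x$; 2. $\langle \hspace{-0.2em} \langle \Lambda(\vec x)|\vec \sigma|\Lambda(\vec x)\rangle \hspace{-0.2em} \rangle \in N_xM_\Lambda$ (it is a normal vector of the eigenmanifold at $x$); 3. $\Delta_x \vec X^2 = \frac{1}{2} {\varepsilon_{ij}}^k \langle \hspace{-0.2em} \langle \Lambda(x)|\sigma_k \otimes \Theta^{ij}|\Lambda(x)\rangle \hspace{-0.2em} \rangle$ (the Heisenberg uncertainty is minimised).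
   Context: A noncommutative D2-brane $\mathfrak M = (\mathfrak X,\mathbb C^2\otimes \mathscr F, D_x)$ is a spectral triple where $\mathscr F$ is a separable Hilbert space, $\mathfrak X$ a $*$-algebra of operators on $\mathscr F$, and $D_x = \sigma_i \otimes (X^i-x^i)$ its Dirac operator with $(\sigma_i)$ the Pauli matrices, $(X^i)$ self-adjoint operators of $\mathfrak X$ and $x\in\mathbb R^3$. $[X^i,X^j]=\imath\Theta^{ij}$, and $\Delta_x \vec X^2 = \langle \hspace{-0.2em} \langle \Lambda(x)|\vec X^2|\Lambda(x)\rangle \hspace{-0.2em} \rangle - \langle \hspace{-0.2em} \langle \Lambda(x)|\vec X|\Lambda(x)\rangle \hspace{-0.2em} \rangle^2$ with $\vec X^2=\delta_{ij}X^iX^j$. *)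

From HB Require Import structures.
From mathcomp Require Import all_boot all_order all_algebra.
From mathcomp Require Import all_classical all_reals all_analysis.
From mathcomp Require Import complex.
Set Implicit Arguments. Unset Strict Implicit. Unset Printing Implicit Defensive.
Import Order.TTheory GRing.Theory Num.Theory.
Local Open Scope ring_scope.
Local Open Scope complex_scope.
Local Open Scope classical_set_scope.

Section D2brane.
Variable R : realType.
Local Notation C := R[i].
Variable V : lmodType C.

(** Complex inner product (physicists' convention: antilinear in the first
    argument, linear in the second), <u|v> = ip u v. *)
Definition is_inner_product (ip : V -> V -> C) : Prop :=
  [/\ (forall (a : C) (u v w : V), ip u (a *: v + w) = a * ip u v + ip u w),
      (forall u v : V, ip v u = (ip u v)^*),
      (forall u : V, 0 <= ip u u) &
      (forall u : V, ip u u = 0 -> u = 0)].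

Definition sqnorm (ip : V -> V -> C) (u : V) : R := complex.Re (ip u u).

Definition ip_complete (ip : V -> V -> C) : Prop :=
  forall s : nat -> V,
    (forall e : R, 0 < e -> exists N : nat, forall m n : nat,
        (N <= m)%N -> (N <= n)%N -> sqnorm ip (s m - s n) < e) ->
    exists l : V, forall e : R, 0 < e -> exists N : nat, forall n : nat,
        (N <= n)%N -> sqnorm ip (s n - l) < e.

Definition ip_separable (ip : V -> V -> C) : Prop :=
  exists s : nat -> V, forall (v : V) (e : R), 0 < e ->
    exists n : nat, sqnorm ip (v - s n) < e.

Definition Ostar_domain (ip : V -> V -> C) (Dom : set V)
    (X : 'I_3 -> {linear V -> V}) : Prop :=
  [/\ Dom 0,
      (forall (a : C) (u v : V), Dom u -> Dom v -> Dom (a *: u + v)),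
      (forall (v : V) (e : R), 0 < e -> exists2 d, Dom d & sqnorm ip (v - d) < e),
      (forall (i : 'I_3) (v : V), Dom v -> Dom (X i v)) &
      (forall (i : 'I_3) (u v : V), Dom u -> Dom v -> ip (X i u) v = ip u (X i v))].

(** C^2 (x) F is represented as F * F (components along the canonical basis
    of C^2). *)
Definition ip2 (ip : V -> V -> C) (psi phi : V * V) : C :=
  ip psi.1 phi.1 + ip psi.2 phi.2.

Definition dom2 (Dom : set V) (psi : V * V) : Prop := Dom psi.1 /\ Dom psi.2.

Definition id_tensor (A : V -> V) (psi : V * V) : V * V := (A psi.1, A psi.2).

(** sigma_k (x) A, with sigma_1 = [[0,1],[1,0]], sigma_2 = [[0,-i],[i,0]],
    sigma_3 = [[1,0],[0,-1]] (k = 0,1,2 in 'I_3). *)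
Definition sigma_tensor (k : 'I_3) (A : V -> V) (psi : V * V) : V * V :=
  match nat_of_ord k with
  | 0 => (A psi.2, A psi.1)
  | 1 => (- ('i *: A psi.2), 'i *: A psi.1)
  | _ => (A psi.1, - A psi.2)
  end.

Definition Dirac (X : 'I_3 -> {linear V -> V}) (x : 'rV[R]_3) (psi : V * V)
  : V * V :=
  \sum_(i < 3) sigma_tensor i (fun v => X i v - (x 0 i)%:C *: v) psi.

Definition eigenmanifold (Dom : set V) (X : 'I_3 -> {linear V -> V})
  : set 'rV[R]_3 :=
  [set x | exists psi : V * V, [/\ dom2 Dom psi, psi <> 0 & Dirac X x psi = 0]].

Definition expect (ip : V -> V -> C) (psi : V * V) (A : V * V -> V * V) : C :=
  ip2 ip psi (A psi).

(** Theta^{ij} defined by [X^i, X^j] = i Theta^{ij} *)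
Definition Theta (X : 'I_3 -> {linear V -> V}) (i j : 'I_3) (v : V) : V :=
  - ('i *: (X i (X j v) - X j (X i v))).

(** Levi-Civita symbol epsilon_{ijk} on indices 0,1,2 *)
Definition levi (i j k : 'I_3) : C :=
  ((i%:R - j%:R) * (j%:R - k%:R) * (k%:R - i%:R)) / 2.

Definition DeltaX2 (ip : V -> V -> C) (X : 'I_3 -> {linear V -> V})
    (psi : V * V) : C :=
  expect ip psi (id_tensor (fun v => \sum_(i < 3) X i (X i v)))
  - \sum_(i < 3) (expect ip psi (id_tensor (X i))) ^+ 2.

Definition normalised_quasicoherent_state (ip : V -> V -> C) (Dom : set V)
    (X : 'I_3 -> {linear V -> V}) (Lambda : 'rV[R]_3 -> V * V) : Prop :=
  (forall x, eigenmanifold Dom X x ->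
     [/\ dom2 Dom (Lambda x), Dirac X x (Lambda x) = 0 &
         ip2 ip (Lambda x) (Lambda x) = 1]) /\
  (forall x, eigenmanifold Dom X x -> forall e : R, 0 < e ->
     exists2 d : R, 0 < d & forall y, eigenmanifold Dom X y ->
       `|y - x| < d ->
       sqnorm ip ((Lambda y).1 - (Lambda x).1) +
       sqnorm ip ((Lambda y).2 - (Lambda x).2) < e).

End D2brane.

Definition tangent_vector (R : realType) (M : set 'rV[R]_3) (x v : 'rV[R]_3)
  : Prop :=
  exists g : R -> 'rV[R]_3,
    [/\ g 0 = x, (\forall t \near (0 : R^o), M (g t)), derivable g 0 1 &
        'D_1 g 0 = v].

Definition normal_vector (R : realType) (M : set 'rV[R]_3) (x n : 'rV[R]_3)
  : Prop :=
  forall v, tangent_vector M x v -> \sum_(i < 3) n 0 i * v 0 i = 0.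

From HB Require Import structures.
From mathcomp Require Import all_boot all_order all_algebra.
From mathcomp Require Import all_classical all_reals all_analysis.
From mathcomp Require Import complex.
From mathcomp Require Import ring lra.
Import Order.TTheory GRing.Theory Num.Theory.
Import numFieldNormedType.Exports.
Local Open Scope ring_scope.
Local Open Scope complex_scope.
Local Open Scope classical_set_scope.

(** The Dirac operator D_x = sigma_k (x) (X^k - x^k) is symmetric and, by the
    Pauli relations sigma_i sigma_j = delta_ij + i eps_ijk sigma_k, satisfies
    {D_x, sigma_j} = 2 (X^j - x^j) and
    D_x^2 = sum_i (X^i - x^i)^2 - 1/2 eps_ijk sigma_k (x) Theta^ij.
    For a normalised psi in ker D_x, pairing the first identity with psi (its
    left side vanishes by symmetry) gives <<X^j>> = x^j, and pairing the
    second one gives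
    0 = sum_i <<(X^i - x^i)^2>> - 1/2 eps_ijk <<sigma_k (x) Theta^ij>>, whose
    first term is Delta_x X^2 by the first item.
    For the normal vector: D_y - D_x = sum_k (x^k - y^k) sigma_k, so for
    psi = Lambda(x) in ker D_x and chi = Lambda(y) in ker D_y symmetry gives
    sum_k (y^k - x^k) Re <sigma_k psi|chi> = 0.  Along a curve y = g(t) in the
    eigenmanifold through x, divide by t and let t -> 0: continuity of Lambda
    turns this into sum_k v^k <<sigma_k>> = 0 for the velocity v. *)

Lemma Re_realM (R : realType) (e : R) (z : R[i]) :
  complex.Re (e%:C * z) = e * complex.Re z.
Proof. by case: z => a b; rewrite [LHS]/= mul0r subr0. Qed.

Lemma ReD (R : realType) (a b : R[i]) :
  complex.Re (a + b) = complex.Re a + complex.Re b.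
Proof. by case: a; case: b. Qed.

Lemma Re_conj (R : realType) (z : R[i]) : complex.Re (conjc z) = complex.Re z.
Proof. by case: z. Qed.

Lemma conjc_i (R : realType) : conjc ('i : R[i]) = - 'i.
Proof. by apply/eqP; rewrite eq_complex /= oppr0 !eqxx. Qed.

Lemma mulii (R : realType) : 'i * 'i = -1 :> R[i].
Proof. by rewrite -expr2 sqr_i. Qed.

Section InnerProduct.
Variables (R : realType) (V : lmodType R[i]) (ip : V -> V -> R[i]).
Hypothesis ip_inner : is_inner_product ip.
Local Set Implicit Arguments.

Lemma ipC u v : ip v u = (ip u v)^*.
Proof. by case: ip_inner. Qed.

Lemma ipDr u v w : ip u (v + w) = ip u v + ip u w.
Proof. by case: ip_inner => lin _ _ _; rewrite -[v in LHS]scale1r lin mul1r. Qed.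

Lemma ip0r u : ip u 0 = 0.
Proof. by apply: (addrI (ip u 0)); rewrite -ipDr !addr0. Qed.

Lemma ipZr a u v : ip u (a *: v) = a * ip u v.
Proof. by case: ip_inner => lin _ _ _; rewrite -[a *: v]addr0 lin ip0r addr0. Qed.

Lemma ipNr u v : ip u (- v) = - ip u v.
Proof. by rewrite -scaleN1r ipZr mulN1r. Qed.

Lemma ipBr u v w : ip u (v - w) = ip u v - ip u w.
Proof. by rewrite ipDr ipNr. Qed.

Lemma ip_sumr (I : Type) (r : seq I) (P : pred I) (F : I -> V) u :
  ip u (\sum_(i <- r | P i) F i) = \sum_(i <- r | P i) ip u (F i).
Proof. exact: (big_morph _ (ipDr u) (ip0r u)). Qed.

Lemma ipDl u v w : ip (v + w) u = ip v u + ip w u.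
Proof. by rewrite !(ipC u) ipDr rmorphD. Qed.

Lemma ip0l u : ip 0 u = 0.
Proof. by rewrite ipC ip0r rmorph0. Qed.

Lemma ipZl a u v : ip (a *: v) u = conjc a * ip v u.
Proof. by rewrite !(ipC u) ipZr rmorphM. Qed.

Lemma ipNl u v : ip (- v) u = - ip v u.
Proof. by rewrite !(ipC u) ipNr rmorphN. Qed.

Lemma ipBl u v w : ip (v - w) u = ip v u - ip w u.
Proof. by rewrite ipDl ipNl. Qed.

Lemma ip_suml (I : Type) (r : seq I) (P : pred I) (F : I -> V) u :
  ip (\sum_(i <- r | P i) F i) u = \sum_(i <- r | P i) ip (F i) u.
Proof. exact: (big_morph _ (ipDl u) (ip0l u)). Qed.

Lemma sqnorm_ge0 u : 0 <= sqnorm ip u.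
Proof. by case: ip_inner => _ _ pos _; move: (pos u); rewrite lecE => /andP[]. Qed.

Lemma sqnorm_scaleB (e : R) u w :
  sqnorm ip (e%:C *: u - w) =
  e ^+ 2 * sqnorm ip u - 2 * e * complex.Re (ip u w) + sqnorm ip w.
Proof.
rewrite /sqnorm ipBl !ipBr !ipZl !ipZr conjc_real (ipC u w).
by rewrite !raddfB /= !Re_realM Re_conj; ring.
Qed.

Lemma Re_ip_lt (e : R) u w : 0 < e -> sqnorm ip w < e ^+ 2 ->
  `|complex.Re (ip u w)| < e * (sqnorm ip u + 1).
Proof.
move=> e_gt0 w_small.
have := sqnorm_ge0 (e%:C *: u - w); have := sqnorm_ge0 (e%:C *: u - (- w)).
rewrite !sqnorm_scaleB ipNr /sqnorm ipNl ipNr opprK raddfN /=.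
have := sqnorm_ge0 u; rewrite /sqnorm => u_ge0 plus_ge0 minus_ge0.
by rewrite ltr_norml; apply/andP; split; nra.
Qed.

Lemma Re_ip_continuous_at n (M : set 'rV[R]_n) (x : 'rV[R]_n)
    (f : 'rV[R]_n -> V) a :
  (forall e, 0 < e -> exists2 d, 0 < d &
     forall y, M y -> `|y - x| < d -> sqnorm ip (f y - f x) < e) ->
  forall e, 0 < e -> exists2 d, 0 < d &
     forall y, M y -> `|y - x| < d ->
       `|complex.Re (ip a (f y)) - complex.Re (ip a (f x))| < e.
Proof.
move=> f_cont e e_gt0.
have c_gt0 : 0 < sqnorm ip a + 1 by rewrite ltr_wpDl ?sqnorm_ge0.
have eps_gt0 : 0 < e / (sqnorm ip a + 1) by rewrite divr_gt0.
have [d d_gt0 f_near] := f_cont _ (exprn_gt0 2 eps_gt0).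
exists d => // y My yx_lt_d; rewrite -raddfB /= -ipBr.
by rewrite -[e](divfK (lt0r_neq0 c_gt0)) Re_ip_lt ?f_near.
Qed.

End InnerProduct.

Definition symmetric_on {R : realType} {V : lmodType R[i]} (ip : V -> V -> R[i])
    (D : set V) (A : V -> V) : Prop :=
  forall u v, D u -> D v -> ip (A u) v = ip u (A v).

Section SymmetricOperators.
Variables (R : realType) (V : lmodType R[i]) (ip : V -> V -> R[i]).
Hypothesis ip_inner : is_inner_product ip.
Local Set Implicit Arguments.

Lemma symmetric_expect_real (D : set V) (A : V -> V) u :
  symmetric_on ip D A -> D u -> ip u (A u) = (complex.Re (ip u (A u)))%:C.
Proof.
move=> A_sym Du; have := ipC ip_inner (A u) u; rewrite A_sym //.
by case: (ip u (A u)) => a b [b_eq]; congr (_ +i* _); lra.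
Qed.

Lemma symmetric_on_sum (D : set V) n (A : 'I_n -> V -> V) :
  (forall k, symmetric_on ip D (A k)) ->
  symmetric_on ip D (fun u => \sum_(k < n) A k u).
Proof.
move=> A_sym u v Du Dv; rewrite (ip_suml ip_inner) (ip_sumr ip_inner).
by apply: eq_bigr => k _; apply: A_sym.
Qed.

Lemma symmetric_on_shift (D : set V) (A : V -> V) (c : R) :
  symmetric_on ip D A -> symmetric_on ip D (fun v => A v - c%:C *: v).
Proof.
move=> A_sym u v Du Dv; rewrite (ipBl ip_inner) (ipBr ip_inner).
by rewrite (ipZl ip_inner) (ipZr ip_inner) conjc_real A_sym.
Qed.

Lemma ip2_inner : is_inner_product (ip2 ip).
Proof.
case: (ip_inner) => _ _ ip_ge0 ip_eq0; split.
- move=> a u v w; rewrite /ip2 /= !(ipDr ip_inner) !(ipZr ip_inner).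
  by rewrite mulrDr addrACA.
- by move=> u v; rewrite /ip2 (ipC ip_inner u.1) (ipC ip_inner u.2) rmorphD.
- by move=> u; rewrite addr_ge0.
- move=> [u1 u2] /eqP; rewrite /ip2 /= paddr_eq0 //.
  by case/andP => /eqP/ip_eq0 -> /eqP/ip_eq0 ->.
Qed.

Lemma sqnorm_ip2 psi : sqnorm (ip2 ip) psi = sqnorm ip psi.1 + sqnorm ip psi.2.
Proof. by rewrite /sqnorm /ip2 ReD. Qed.

Lemma sigma_tensor_sym (D : set V) (A : V -> V) k :
  symmetric_on ip D A -> symmetric_on (ip2 ip) (dom2 D) (sigma_tensor k A).
Proof.
move=> A_sym [u1 u2] [v1 v2] [/= Du1 Du2] [/= Dv1 Dv2].
rewrite /ip2 /sigma_tensor; case: (nat_of_ord k) => [|[|_]] /=.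
- by rewrite !A_sym // addrC.
- rewrite (ipNl ip_inner) !(ipZl ip_inner) (ipNr ip_inner) !(ipZr ip_inner).
  by rewrite !A_sym // conjc_i; ring.
- by rewrite (ipNl ip_inner) (ipNr ip_inner) !A_sym.
Qed.

End SymmetricOperators.

Definition o0 : 'I_3 := @Ordinal 3 0 isT.
Definition o1 : 'I_3 := @Ordinal 3 1 isT.
Definition o2 : 'I_3 := @Ordinal 3 2 isT.

Lemma sum_ord3 (T : nmodType) (F : 'I_3 -> T) :
  \sum_(k < 3) F k = F o0 + F o1 + F o2.
Proof.
rewrite !big_ord_recr big_ord0 /= add0r.
by congr (F _ + F _ + F _); apply: val_inj.
Qed.

Lemma ord3_cases (k : 'I_3) : [\/ k = o0, k = o1 | k = o2].
Proof.
case: k => [[|[|[|//]]] k_lt3]; [apply: Or31 | apply: Or32 | apply: Or33];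
  exact: val_inj.
Qed.

Lemma sum_levi (R : realType) (f : 'I_3 -> 'I_3 -> 'I_3 -> R[i]) :
  \sum_(i < 3) \sum_(j < 3) \sum_(k < 3) levi R i j k * f i j k =
  f o0 o1 o2 - f o1 o0 o2 + f o1 o2 o0 - f o2 o1 o0 + f o2 o0 o1 - f o0 o2 o1.
Proof. by rewrite !sum_ord3 /levi /=; field. Qed.

Section Dirac.
Variables (R : realType) (V : lmodType R[i]) (ip : V -> V -> R[i]).
Variables (Dom : set V) (X : 'I_3 -> {linear V -> V}).
Hypothesis ip_inner : is_inner_product ip.
Hypothesis X_sym : forall k, symmetric_on ip Dom (X k).
Hypothesis Dom0 : Dom 0.
Hypothesis Dom_lin : forall (a : R[i]) u v, Dom u -> Dom v -> Dom (a *: u + v).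
Local Set Implicit Arguments.

Let XD k u v : X k (u + v) = X k u + X k v := raddfD (X k) u v.
Let XB k u v : X k (u - v) = X k u - X k v := raddfB (X k) u v.
Let XN k v : X k (- v) = - X k v := raddfN (X k) v.
Let XZ k a v : X k (a *: v) = a *: X k v := linearZZ (X k) a v.

Definition shifted_position (x : 'rV[R]_3) k (v : V) : V :=
  X k v - (x 0 k)%:C *: v.

Lemma Dirac_sym x : symmetric_on (ip2 ip) (dom2 Dom) (Dirac X x).
Proof.
apply: (symmetric_on_sum (ip2_inner ip_inner)) => k.
exact/(sigma_tensor_sym ip_inner)/(symmetric_on_shift ip_inner).
Qed.

Lemma dom2_sigma k psi : dom2 Dom psi -> dom2 Dom (sigma_tensor k id psi).
Proof.
have Dom_scale a u : Dom u -> Dom (a *: u).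
  by move/(Dom_lin a)/(_ Dom0); rewrite addr0.
case: psi => p q [/= Dp Dq]; rewrite /sigma_tensor.
case: (nat_of_ord k) => [|[|_]]; split => //=.
- by rewrite -scaleNr; apply: Dom_scale.
- exact: Dom_scale.
- by rewrite -scaleN1r; apply: Dom_scale.
Qed.

Lemma sigma_tensor0 k : sigma_tensor k id (0 : V * V) = 0.
Proof.
rewrite /sigma_tensor.
by case: (nat_of_ord k) => [|[|_]]; rewrite /= ?scaler0 ?oppr0.
Qed.

Lemma Dirac0 x : Dirac X x 0 = 0.
Proof.
rewrite /Dirac big1 // => k _; rewrite /sigma_tensor /= linear0 scaler0 subrr.
by case: (nat_of_ord k) => [|[|_]]; rewrite ?scaler0 ?oppr0.
Qed.

(** The operator identities are stated paired with an arbitrary [phi]: both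
    sides then expand to polynomials in the scalars [ip a (X i (X j p))], and
    [ring] (with ['i * 'i = -1]) decides them. *)
Lemma Dirac_sigma_anticommute x j phi psi :
  ip2 ip phi (Dirac X x (sigma_tensor j id psi)) +
  ip2 ip phi (sigma_tensor j id (Dirac X x psi)) =
  2 * ip2 ip phi (id_tensor (shifted_position x j) psi).
Proof.
move: phi psi => [a b] [p q].
case: (ord3_cases j) => ->;
rewrite /ip2 /Dirac !sum_ord3 /sigma_tensor /shifted_position /id_tensor /=;
rewrite ?(XD, XB, XN, XZ);
rewrite ?(ipDr ip_inner, ipBr ip_inner, ipNr ip_inner, ipZr ip_inner);
ring: (mulii R).
Qed.

Lemma Dirac_sqr x phi psi :
  ip2 ip phi (Dirac X x (Dirac X x psi)) =
  ip2 ip phi (id_tensor (fun v =>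
    \sum_(k < 3) shifted_position x k (shifted_position x k v)) psi) -
  2^-1 * \sum_(i < 3) \sum_(j < 3) \sum_(k < 3)
           levi R i j k * ip2 ip phi (sigma_tensor k (Theta X i j) psi).
Proof.
move: phi psi => [a b] [p q].
rewrite sum_levi /ip2 /Dirac !sum_ord3 /sigma_tensor /shifted_position.
rewrite /id_tensor /Theta /= !sum_ord3 ?(XD, XB, XN, XZ).
rewrite ?(ipDr ip_inner, ipBr ip_inner, ipNr ip_inner, ipZr ip_inner).
by field: (mulii R).
Qed.

Lemma ip2_Dirac_shift x y phi chi :
  ip2 ip phi (Dirac X x chi) =
  ip2 ip phi (Dirac X y chi) +
  \sum_(k < 3) (y 0 k - x 0 k)%:C * ip2 ip phi (sigma_tensor k id chi).
Proof.
move: phi chi => [a b] [p q].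
rewrite /ip2 /Dirac !sum_ord3 /sigma_tensor /shifted_position /= !rmorphB.
by rewrite ?(ipDr ip_inner, ipBr ip_inner, ipNr ip_inner, ipZr ip_inner); ring.
Qed.

Lemma expect_position_kernel x psi :
  dom2 Dom psi -> Dirac X x psi = 0 -> ip2 ip psi psi = 1 ->
  forall k, expect ip psi (id_tensor (X k)) = (x 0 k)%:C.
Proof.
move=> Dpsi Dirac_psi psi_unit k.
have ip2_inner := ip2_inner ip_inner.
have expect_shifted : ip2 ip psi (id_tensor (shifted_position x k) psi) =
    expect ip psi (id_tensor (X k)) - (x 0 k)%:C * ip2 ip psi psi.
  by rewrite /expect /ip2 /= !(ipBr ip_inner) !(ipZr ip_inner); ring.
have := Dirac_sigma_anticommute x k psi psi.
rewrite -(Dirac_sym x Dpsi (dom2_sigma k Dpsi)) Dirac_psi sigma_tensor0.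
rewrite (ip0l ip2_inner) (ip0r ip2_inner) addr0 expect_shifted psi_unit mulr1.
by move/esym/eqP; rewrite mulf_eq0 pnatr_eq0 subr_eq0 => /eqP.
Qed.

Lemma expect_shifted_sqr (x : 'rV[R]_3) psi :
  (forall k, expect ip psi (id_tensor (X k)) = (x 0 k)%:C) ->
  ip2 ip psi psi = 1 ->
  ip2 ip psi (id_tensor (fun v =>
    \sum_(k < 3) shifted_position x k (shifted_position x k v)) psi) =
  DeltaX2 ip X psi.
Proof.
case: psi => p q expect_X psi_unit.
have expect_Xq k : ip q (X k q) = (x 0 k)%:C - ip p (X k p).
  by rewrite -(expect_X k) /expect /ip2 /= addrC addKr.
have unit_q : ip q q = 1 - ip p p by rewrite -psi_unit /ip2 /= addrC addKr.
rewrite /DeltaX2 /expect /ip2 /id_tensor /shifted_position /= !sum_ord3.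
rewrite ?(XD, XB, XN, XZ).
rewrite ?(ipDr ip_inner, ipBr ip_inner, ipNr ip_inner, ipZr ip_inner).
by rewrite !expect_Xq unit_q; ring.
Qed.

Lemma DeltaX2_kernel x psi :
  dom2 Dom psi -> Dirac X x psi = 0 -> ip2 ip psi psi = 1 ->
  DeltaX2 ip X psi =
  2^-1 * \sum_(i < 3) \sum_(j < 3) \sum_(k < 3)
           levi R i j k * expect ip psi (sigma_tensor k (Theta X i j)).
Proof.
move=> Dpsi Dirac_psi psi_unit.
have := Dirac_sqr x psi psi.
rewrite Dirac_psi Dirac0 (ip0r (ip2_inner ip_inner)) expect_shifted_sqr //.
  by move/esym/eqP; rewrite subr_eq0 => /eqP.
exact: expect_position_kernel.
Qed.

Lemma kernel_pairing x y psi chi :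
  dom2 Dom psi -> dom2 Dom chi -> Dirac X x psi = 0 -> Dirac X y chi = 0 ->
  \sum_(k < 3) (y 0 k - x 0 k) * complex.Re (ip2 ip (sigma_tensor k id psi) chi)
  = 0.
Proof.
move=> Dpsi Dchi Dx_psi Dy_chi.
have id_sym : symmetric_on ip Dom id by [].
rewrite (eq_bigr (fun k =>
  (y 0 k - x 0 k) * complex.Re (ip2 ip psi (sigma_tensor k id chi)))); last first.
  by move=> k _; rewrite (sigma_tensor_sym ip_inner k id_sym Dpsi Dchi).
have := ip2_Dirac_shift x y psi chi.
rewrite -(Dirac_sym x Dpsi Dchi) Dx_psi Dy_chi (ip0l (ip2_inner ip_inner)).
rewrite (ip0r (ip2_inner ip_inner)) add0r => /(congr1 (@complex.Re R)) pairing0.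
rewrite sum_ord3 !ReD !Re_realM /= in pairing0.
by rewrite sum_ord3 pairing0.
Qed.

End Dirac.

Section NormalVector.
Variable R : realType.

Lemma difference_quotient_cvg (g : R^o -> 'rV[R]_3) :
  derivable g 0 1 ->
  (fun t : R^o => t^-1 *: (g t - g 0)) @ (0 : R^o)^' --> 'D_1 g 0.
Proof.
move=> dg; suff -> : (fun t : R^o => t^-1 *: (g t - g 0)) =
    (fun h => h^-1 *: ((g \o shift 0) (h *: 1) - g 0)) by exact: dg.
by apply/funext => t /=; rewrite addr0 [t *: 1]mulr1.
Qed.

Lemma normal_vector_of_pairing (M : set 'rV[R]_3) (x : 'rV[R]_3)
    (W : 'I_3 -> 'rV[R]_3 -> R) :
  (forall y, M y -> \sum_(k < 3) (y 0 k - x 0 k) * W k y = 0) ->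
  (forall k e, 0 < e -> exists2 d, 0 < d &
     forall y, M y -> `|y - x| < d -> `|W k y - W k x| < e) ->
  normal_vector M x (\row_k W k x).
Proof.
move=> pairing0 W_cont v [g [g0 gM dg <-]].
have Q_cvg := difference_quotient_cvg g dg; rewrite g0 in Q_cvg.
have g_cvg : g @ (0 : R^o)^' --> x.
  rewrite -g0; apply: cvg_within_filter.
  exact/differentiable_continuous/derivable1_diffP.
have gM' : \forall t \near (0 : R^o)^', M (g t) by exact: nbhs_dnbhs.
have W_cvg k : (fun t => W k (g t)) @ (0 : R^o)^' --> W k x.
  apply/cvgrPdist_lt => e e_gt0; have [d d_gt0 W_near] := W_cont k e e_gt0.
  have /cvgrPdist_lt/(_ d d_gt0) g_near := g_cvg.
  near=> t; rewrite distrC; apply: W_near; first by near: t; exact: gM'.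
  by rewrite distrC; near: t; exact: g_near.
have Q_coord k :
    (fun t : R^o => (t^-1 *: (g t - x)) 0 k) @ (0 : R^o)^' --> 'D_1 g 0 0 k.
  exact: (continuous_cvg _ (@coord_continuous R 1 3 0 k _) Q_cvg).
have lim_pairing :
    (fun t : R^o => \sum_(k < 3) (t^-1 *: (g t - x)) 0 k * W k (g t))
    @ (0 : R^o)^' --> \sum_(k < 3) 'D_1 g 0 0 k * W k x.
  by apply: cvg_big => [|k _]; [exact: add_continuous | exact: cvgM].
have pairing_near : \forall t \near (0 : R^o)^',
    \sum_(k < 3) (t^-1 *: (g t - x)) 0 k * W k (g t) = 0.
  near=> t; under eq_bigr => k _ do rewrite !mxE -mulrA.
  by rewrite -mulr_sumr pairing0 ?mulr0 //; near: t; exact: gM'.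
have pairing_v : \sum_(k < 3) 'D_1 g 0 0 k * W k x = 0.
  have lim0 : (fun t : R^o => \sum_(k < 3) (t^-1 *: (g t - x)) 0 k * W k (g t))
      @ (0 : R^o)^' --> (0 : R) by exact: cvg_near_cst.
  by apply: (cvg_unique _ lim_pairing lim0); exact: norm_hausdorff.
by rewrite -[RHS]pairing_v; apply: eq_bigr => k _; rewrite mxE mulrC.
Unshelve. all: by end_near.
Qed.

End NormalVector.

Theorem mainTheorem2 (R : realType) (V : lmodType R[i]) (ip : V -> V -> R[i])
    (Dom : set V) (X : 'I_3 -> {linear V -> V})
    (Lambda : 'rV[R]_3 -> V * V) :
  is_inner_product ip -> ip_complete ip -> ip_separable ip ->
  Ostar_domain ip Dom X ->
  normalised_quasicoherent_state ip Dom X Lambda ->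
  forall x : 'rV[R]_3, eigenmanifold Dom X x ->
    [/\ (forall i : 'I_3,
           expect ip (Lambda x) (id_tensor (X i)) = (x 0 i)%:C),
        (exists n : 'rV[R]_3,
           (forall k : 'I_3,
              expect ip (Lambda x) (sigma_tensor k id) = (n 0 k)%:C) /\
           normal_vector (eigenmanifold Dom X) x n) &
        DeltaX2 ip X (Lambda x) =
          2^-1 * \sum_(i < 3) \sum_(j < 3) \sum_(k < 3)
                   levi R i j k * expect ip (Lambda x) (sigma_tensor k (Theta X i j))].
Proof.
move=> ip_inner _ _ [Dom0 Dom_lin _ _ X_sym] [kernel Lambda_cont] x Mx.
have [DLx DiracLx Lx_unit] := kernel x Mx.
have id_sym : symmetric_on ip Dom id by [].
have sigma_sym k := sigma_tensor_sym ip_inner k id_sym.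
split.
- exact: (expect_position_kernel ip_inner X_sym Dom0 Dom_lin
           DLx DiracLx Lx_unit).
- pose W k y := complex.Re (ip2 ip (sigma_tensor k id (Lambda x)) (Lambda y)).
  exists (\row_k W k x); split.
    move=> k; rewrite mxE /W (sigma_sym k _ _ DLx DLx).
    exact: (symmetric_expect_real (ip2_inner ip_inner) _ (sigma_sym k) DLx).
  apply: (normal_vector_of_pairing _ _ _ W) => [y My | k].
    have [DLy DiracLy _] := kernel y My.
    exact: (kernel_pairing ip_inner X_sym DLx DLy).
  apply: (Re_ip_continuous_at (ip2_inner ip_inner)) => e e_gt0.
  have [d d_gt0 Lambda_near] := Lambda_cont x Mx e e_gt0.
  by exists d => // y My yx_lt_d; rewrite sqnorm_ip2; apply: Lambda_near.
- exact: (DeltaX2_kernel ip_inner X_sym Dom0 Dom_lin DLx DiracLx Lx_unit).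
Qed.
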